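(* Let $\mathcal{B}^*$ be the three-receiver unicast index coding problem described in the context, with equivalent single unicast side information graph $G^*$ and underlying undirected graph $G^*_u$. Then $$\beta^*_{\mathcal{B}^*}(1)=\bar{\chi}_f(G^*_u)=\bar{\chi}(G^*_u)=7,$$ where $\bar{\chi}_f$ and $\bar{\chi}$ denote the fractional clique cover number and the clique cover number, respectively.
   Context: Index coding model. A unicast index coding problem has $n$ receivers $u_1,\dots,u_n$ and $N$ messages $\mathbf{x}_1,\dots,\mathbf{x}_N$, each a vector in $\mathcal{A}^m$ for a finite alphabet $\mathcal{A}$ and a positive integer $m$ (the message length; all messages have the same length). Receiver $u_i$ demands $\mathbf{x}_j$, $j\in W_i$, and knows $\mathbf{x}_j$, $j\in K_i$, as side information, where $W_i,K_i\subseteq[N]$, $W_i\cap K_i=\emptyset$, the $W_i$ are pairwise disjoint and every message is demanded by exactly one receiver. An index code consists of an encoder mapping $(\mathbf{x}_1,\dots,\mathbf{x}_N)$ to a codeword $\mathbf{c}\in\mathcal{A}^\ell$, subsets $R_i\subseteq[\ell]$ (receiver $u_i$ observes only $\mathbf{c}_{R_i}$), and decoders at each $u_i$ mapping $(\mathbf{c}_{R_i},\mathbf{x}_{K_i})$ to $\mathbf{x}_{W_i}$. It is valid if every receiver decodes its demand correctly for all message values. Its broadcast rate is $\beta=\ell/m$. The locality at $u_i$ is $r_i=|R_i|/(m|W_i|)$ and the locality of the code is $r=\max_i r_i$. For a problem $\mathcal{B}$, $\beta^*_{\mathcal{B}}(r)$ is the infimum of broadcast rates of all valid index codes, over all message lengths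 $m\ge1$, with locality at most $r$. The problem $\mathcal{B}^*$: three receivers $u_1,u_2,u_3$ and 12 messages with $W_1=\{1,2,3,4\}$, $W_2=\{5,6,7,8\}$, $W_3=\{9,10,11,12\}$, $K_1=\{5,6,9,10\}$, $K_2=\{1,2,9,11\}$, $K_3=\{1,3,5,7\}$. $G^*$ is the directed graph on $[12]$ with a directed edge $(a,b)$ iff $b\in K_i$ where $a\in W_i$. $G^*_u$ is the undirected graph on $[12]$ with $\{a,b\}$ an edge iff both $(a,b)$ and $(b,a)$ are edges of $G^*$. *)

From HB Require Import structures.
From mathcomp Require Import all_boot all_order all_algebra.
From mathcomp Require Import boolp classical_sets reals.
Set Implicit Arguments. Unset Strict Implicit. Unset Printing Implicit Defensive.
Import Order.TTheory GRing.Theory Num.Theory.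

Local Open Scope ring_scope.

(* A problem: n receivers, N messages, demand sets W i and side-information
   sets K i (messages are indexed by 'I_N, i.e. message j+1 of the paper is j). *)

Section IndexCode.
Variables (n N : nat) (W K : 'I_n -> {set 'I_N}).

(* The decoder of receiver i
   only gets the codeword symbols indexed by Rs i and the messages indexed by
   K i; it must output every demanded message (indexed by W i). *)
Definition valid_index_code (A : Type) (m l : nat)
  (enc : ('I_N -> 'I_m -> A) -> ('I_l -> A))
  (Rs : 'I_n -> {set 'I_l})
  (dec : forall i : 'I_n,
           (forall k : 'I_l, k \in Rs i -> A) ->
           (forall j : 'I_N, j \in K i -> 'I_m -> A) ->
           (forall j : 'I_N, j \in W i -> 'I_m -> A)) : Prop :=
  forall (x : 'I_N -> 'I_m -> A) (i : 'I_n) (j : 'I_N) (hj : j \in W i) (t : 'I_m),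
    dec i (fun k _ => enc x k) (fun j' _ => x j') j hj t = x j t.

Definition locality_le (R : realType) (m l : nat) (Rs : 'I_n -> {set 'I_l}) (r : R) :=
  forall i : 'I_n, (#|Rs i|%:R / (m * #|W i|)%:R : R) <= r.

Definition rates_locality (R : realType) (r : R) : set R :=
  [set b | exists (A : finType) (m l : nat)
             (enc : ('I_N -> 'I_m -> A) -> ('I_l -> A))
             (Rs : 'I_n -> {set 'I_l})
             (dec : forall i : 'I_n,
                      (forall k : 'I_l, k \in Rs i -> A) ->
                      (forall j : 'I_N, j \in K i -> 'I_m -> A) ->
                      (forall j : 'I_N, j \in W i -> 'I_m -> A)),
       [/\ (1 < #|A|)%N, (0 < m)%N, @valid_index_code A m l enc Rs dec,
           @locality_le R m l Rs r & b = l%:R / m%:R]]%classic.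

Definition beta_star (R : realType) (r : R) : R := inf (rates_locality r).

Definition side_info_edge : rel 'I_N :=
  fun a b => [exists i : 'I_n, (a \in W i) && (b \in K i)].

Definition und_edge : rel 'I_N :=
  fun a b => side_info_edge a b && side_info_edge b a.

End IndexCode.

Section Cliques.
Variables (T : finType) (adj : rel T).

Definition is_clique (C : {set T}) : bool :=
  [forall x in C, forall y in C, (x != y) ==> adj x y].

Definition clique_cover (P : {set {set T}}) : bool :=
  [forall C in P, is_clique C] && (finset.cover P == [set: T]).

Lemma clique_cover_exists : exists k, [exists P : {set {set T}}, clique_cover P && (#|P| == k)].
Proof.
exists #|[set [set x] | x : T]|; apply/existsP; exists [set [set x] | x : T].
rewrite eqxx andbT; apply/andP; split.
  apply/forall_inP => C /imsetP [x _ ->]; apply/forall_inP => y /set1P ->.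
  by apply/forall_inP => z /set1P ->; rewrite eqxx.
apply/eqP/setP => y; rewrite finset.in_setT; apply/bigcupP; exists [set y]; last exact: set11.
by apply/imsetP; exists y.
Qed.

Definition clique_cover_number : nat := ex_minn clique_cover_exists.

Definition frac_clique_covers (R : realType) : set R :=
  [set s | exists w : {set T} -> R,
     [/\ forall C, 0 <= w C,
         forall v : T, 1 <= \sum_(C : {set T} | is_clique C && (v \in C)) w C
       & s = \sum_(C : {set T} | is_clique C) w C]]%classic.

Definition frac_clique_cover_number (R : realType) : R := inf (@frac_clique_covers R).

End Cliques.

(* receivers u_1,u_2,u_3 are 0,1,2 ; message j of the paper is j-1 *)
Definition setI12 (s : seq nat) : {set 'I_12} := [set j : 'I_12 | val j \in s].

Definition Wstar (i : 'I_3) : {set 'I_12} :=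
  match val i with
  | 0 => setI12 [:: 0; 1; 2; 3]%N
  | 1 => setI12 [:: 4; 5; 6; 7]%N
  | _ => setI12 [:: 8; 9; 10; 11]%N
  end.

Definition Kstar (i : 'I_3) : {set 'I_12} :=
  match val i with
  | 0 => setI12 [:: 4; 5; 8; 9]%N
  | 1 => setI12 [:: 0; 1; 8; 10]%N
  | _ => setI12 [:: 0; 2; 4; 6]%N
  end.

Definition Gstar_u : rel 'I_12 := und_edge Wstar Kstar.

(** Let I = {1,2,3,4,7,8,12}.  The messages outside I together with the
    codeword let u_1, then u_2, then u_3 decode (K_1 misses I, K_2 lies in
    W_1 and the complement of I, K_3 in W_1 and W_2), so every valid code is
    injective on the |A|^(7m) values of the messages in I and l >= 7m.
    Conversely G*_u is the union of three 4-cycles, covered by the seven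
    cliques {1,5,9}, {2,6}, {3,10}, {7,11}, {4}, {8}, {12}.  Sending the XOR of
    each clique is a valid code in which each receiver reads one symbol per
    demanded message, so it has rate 7 and locality 1; and since I is
    independent in G*_u it meets every clique at most once, so 7 also bounds
    every fractional clique cover from below.  (Messages are numbered from 1
    here, as in the paper; the code numbers them from 0.) *)

From HB Require Import structures.
From mathcomp Require Import all_boot all_order all_algebra.
From mathcomp Require Import boolp classical_sets reals.
Set Implicit Arguments. Unset Strict Implicit. Unset Printing Implicit Defensive.
Import Order.TTheory GRing.Theory Num.Theory.

Local Open Scope ring_scope.

Lemma inf_eq_min (R : realType) (E : set R) (x : R) :
  E x -> lbound E x -> inf E = x.
Proof.
move=> Ex lbx; apply/le_anti/andP; split; first exact: ge_inf (ex_intro _ x lbx) _ Ex.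
exact: lb_le_inf (ex_intro _ x Ex) lbx.
Qed.

Section CliqueCovers.
Variables (T : finType) (adj : rel T).

Definition independent (I : {set T}) : bool :=
  [forall x in I, forall y in I, (x != y) ==> ~~ adj x y].

Lemma clique_cover_number_le (P : {set {set T}}) :
  clique_cover adj P -> (clique_cover_number adj <= #|P|)%N.
Proof.
move=> coverP; rewrite /clique_cover_number; case: ex_minnP => k _; apply.
by apply/existsP; exists P; rewrite coverP eqxx.
Qed.

Lemma clique_cover_frac (R : realType) (P : {set {set T}}) :
  clique_cover adj P -> frac_clique_covers adj (#|P|%:R : R).
Proof.
case/andP => /forall_inP P_clique /eqP coverP.
exists (fun C => (C \in P)%:R); split => [C|v|]; first by rewrite ler0n.
  have /bigcupP [C PC vC] : v \in finset.cover P by rewrite coverP finset.in_setT.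
  rewrite (bigD1 C) /=; last by rewrite P_clique.
  by rewrite PC lerDl sumr_ge0 // => C' _; rewrite ler0n.
rewrite -sum1_card natr_sum big_mkcond [RHS]big_mkcond /=.
apply: eq_bigr => C _; case PC: (C \in P); last by rewrite if_same.
by rewrite P_clique.
Qed.

Section Independent.
Variable I : {set T}.
Hypothesis I_indep : independent I.

Lemma card_independent_clique_le1 (C : {set T}) :
  is_clique adj C -> (#|I :&: C| <= 1)%N.
Proof.
move=> /forall_inP C_clique; apply/card_le1_eqP => x y /setIP [Ix Cx] /setIP [Iy Cy].
apply/eqP; apply: contraT => xy.
have /forall_inP/(_ _ Cx)/implyP/(_ xy) := C_clique _ Cy.
by have /forall_inP/(_ _ Ix)/implyP/(_ xy)/negbTE -> := forall_inP I_indep _ Iy.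
Qed.

Lemma independent_le_clique_cover (P : {set {set T}}) :
  clique_cover adj P -> (#|I| <= #|P|)%N.
Proof.
case/andP => /forall_inP P_clique /eqP coverP.
have -> : I = finset.cover [set I :&: C | C in P].
  apply/setP => v; rewrite cover_imset; apply/idP/bigcupP => [Iv|[C _ /setIP []//]].
  have /bigcupP [C PC Cv] : v \in finset.cover P by rewrite coverP finset.in_setT.
  by exists C; rewrite ?inE ?Iv.
apply: (leq_trans (leq_card_cover _).1).
apply: (leq_trans _ (leq_imset_card _ _)).
rewrite -sum1_card; apply: leq_sum => _ /imsetP [C PC ->].
exact: card_independent_clique_le1 (P_clique C PC).
Qed.

Lemma clique_cover_number_ge : (#|I| <= clique_cover_number adj)%N.
Proof.
rewrite /clique_cover_number; case: ex_minnP => k /existsP [P /andP [coverP /eqP <-]] _.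
exact: independent_le_clique_cover.
Qed.

Lemma frac_clique_covers_ge (R : realType) (s : R) :
  frac_clique_covers adj s -> #|I|%:R <= s.
Proof.
case=> w [w_ge0 w_cover ->].
rewrite -sum1_card natr_sum.
apply: le_trans (ler_sum _ (fun v _ => w_cover v)) _.
rewrite (exchange_big_dep (fun C => is_clique adj C)) /=; last by move=> v C _ /andP [].
apply: ler_sum => C C_clique.
rewrite (eq_bigl [in I :&: C]) => [|v]; last by rewrite !inE C_clique.
rewrite sumr_const; have := card_independent_clique_le1 C_clique.
by case: #|_| => [|[|//]] _; rewrite ?mulr0n ?mulr1n.
Qed.

End Independent.
End CliqueCovers.

Section Decoding.
Variables (n N : nat) (W K : 'I_n -> {set 'I_N}).

Definition decoding_closed (D : {set 'I_N}) : Prop :=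
  forall i, K i \subset D -> W i \subset D.

(* The condition behind the maximum acyclic induced subgraph bound, in
   least-fixpoint form: starting from the messages outside I, receivers can
   successively decode all messages. *)
Definition complement_decodes (I : {set 'I_N}) : Prop :=
  forall D : {set 'I_N}, ~: I \subset D -> decoding_closed D -> D = [set: 'I_N].

Section ValidCode.
Variables (A : finType) (m l : nat) (enc : ('I_N -> 'I_m -> A) -> 'I_l -> A)
  (Rs : 'I_n -> {set 'I_l})
  (dec : forall i : 'I_n,
           (forall k : 'I_l, k \in Rs i -> A) ->
           (forall j : 'I_N, j \in K i -> 'I_m -> A) ->
           (forall j : 'I_N, j \in W i -> 'I_m -> A)).
Hypothesis code_valid : valid_index_code enc dec.

Lemma valid_code_decodes (x1 x2 : 'I_N -> 'I_m -> A) (i : 'I_n) :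
  enc x1 =1 enc x2 -> {in K i, forall j, x1 j =1 x2 j} ->
  {in W i, forall j, x1 j =1 x2 j}.
Proof.
move=> enc12 K12 j Wj t; rewrite -(code_valid x1 Wj t) -(code_valid x2 Wj t).
have -> : (fun k (_ : k \in Rs i) => enc x1 k) = (fun k _ => enc x2 k).
  by apply: functional_extensionality_dep => k; apply: funext => _; apply: enc12.
have -> // : (fun j' (_ : j' \in K i) => x1 j') = (fun j' _ => x2 j').
apply: functional_extensionality_dep => j'; apply: funext => Kj'.
by apply: funext; apply: K12.
Qed.

Lemma complement_decodes_agree (I : {set 'I_N}) (x1 x2 : 'I_N -> 'I_m -> A) :
  complement_decodes I -> enc x1 =1 enc x2 ->
  {in ~: I, forall j, x1 j =1 x2 j} -> forall j, x1 j =1 x2 j.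
Proof.
move=> decI enc12 out12.
pose D := [set j | [forall t, x1 j t == x2 j t]].
have DP j : reflect (x1 j =1 x2 j) (j \in D).
  by rewrite inE; apply: (iffP forallP) => h t; apply/eqP.
have D_closed : decoding_closed D.
  move=> i /fintype.subsetP KD; apply/fintype.subsetP => j Wj; apply/DP.
  by apply: valid_code_decodes Wj => // j' /KD /DP.
have outD : ~: I \subset D by apply/fintype.subsetP => j /out12 /DP.
by move=> j; apply/DP; rewrite (decI D outD D_closed) finset.in_setT.
Qed.

Lemma code_length_ge (I : {set 'I_N}) :
  (1 < #|A|)%N -> complement_decodes I -> (#|I| * m <= l)%N.
Proof.
move=> A_gt1 decI; have /card_gt0P [a0 _] := ltnW A_gt1.
pose ext (g : {ffun {j | j \in I} * 'I_m -> A}) (j : 'I_N) (t : 'I_m) : A :=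
  if insub j is Some s then g (s, t) else a0.
pose F g : {ffun 'I_l -> A} := [ffun k => enc (ext g) k].
have F_inj : injective F.
  move=> g1 g2 /ffunP F12; apply/ffunP => -[s t].
  have ext12 : forall j, ext g1 j =1 ext g2 j.
    apply: complement_decodes_agree decI _ _ => [k | j].
      by have := F12 k; rewrite !ffunE.
    by rewrite inE => /negbTE Ij t'; rewrite /ext insubF.
  by have := ext12 (val s) t; rewrite /ext valK.
have := leq_card F F_inj; rewrite !card_ffun card_prod card_sig !card_ord.
by rewrite leq_exp2l // cardE.
Qed.

End ValidCode.

Lemma rates_locality_ge (R : realType) (r b : R) (I : {set 'I_N}) :
  complement_decodes I -> rates_locality W K r b -> #|I|%:R <= b.
Proof.
move=> decI [A [m [l [enc [Rs [dec [A_gt1 m_gt0 valid _ ->]]]]]]].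
rewrite ler_pdivlMr ?ltr0n // -natrM ler_nat.
exact: (code_length_ge valid A_gt1 decI).
Qed.

End Decoding.

Definition extend_by (T : finType) (B : Type) (D : {set T})
    (f : forall k, k \in D -> B) (d : B) (k : T) : B :=
  (if k \in D as b return (k \in D = b -> B) then f k else fun _ => d) (erefl (k \in D)).

Lemma extend_byE (T : finType) (B : Type) (D : {set T}) (g : T -> B) (d : B) (k : T) :
  extend_by (D := D) (fun k _ => g k) d k = if k \in D then g k else d.
Proof. by rewrite /extend_by; move: (erefl (k \in D)); case: (k \in D). Qed.

Section CliqueCoverCode.
Variables (n N : nat) (W K : 'I_n -> {set 'I_N}).
Hypothesis W_disjoint : forall i i' j, j \in W i -> j \in W i' -> i = i'.

Lemma clique_side_info (C : {set 'I_N}) (i : 'I_n) (j v : 'I_N) :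
  is_clique (und_edge W K) C -> j \in C -> v \in C -> j != v -> j \in W i -> v \in K i.
Proof.
move=> /forall_inP C_clique Cj Cv jv Wj.
have /forall_inP/(_ _ Cv)/implyP/(_ jv)/andP [] := C_clique _ Cj.
by case/existsP => i' /andP [Wj' Kv] _; rewrite (W_disjoint Wj Wj').
Qed.

Variables (l : nat) (S : 'I_l -> {set 'I_N}) (cl : 'I_N -> 'I_l).
Hypotheses (S_clique : forall k, is_clique (und_edge W K) (S k))
  (S_cl : forall j, j \in S (cl j)).

Definition xor_encoder (x : 'I_N -> 'I_1 -> bool) (k : 'I_l) : bool :=
  \big[addb/false]_(v in S k) x v ord0.

Definition xor_reads (i : 'I_n) : {set 'I_l} := cl @: W i.

Definition xor_decoder (i : 'I_n) (c : forall k, k \in xor_reads i -> bool)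
    (s : forall j, j \in K i -> 'I_1 -> bool) (j : 'I_N) (_ : j \in W i) (t : 'I_1) :
    bool :=
  extend_by c false (cl j) (+)
  \big[addb/false]_(v in S (cl j) :\ j) extend_by s (fun=> false) v t.

Lemma xor_code_valid : valid_index_code xor_encoder xor_decoder.
Proof.
move=> x i j Wj t; rewrite /xor_decoder extend_byE (ord1 t) imset_f //.
have side_sum : \big[addb/false]_(v in S (cl j) :\ j)
    extend_by (D := K i) (fun v _ => x v) (fun=> false) v ord0 =
  \big[addb/false]_(v in S (cl j) :\ j) x v ord0.
  apply: eq_bigr => v; rewrite !inE extend_byE => /andP [vj Sv].
  by rewrite (clique_side_info (S_clique _) (S_cl j) Sv _ Wj) // eq_sym.
by rewrite side_sum /xor_encoder (big_setD1 j (S_cl j)) addbK.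
Qed.

Lemma xor_code_locality (R : realType) : locality_le W 1 xor_reads (1 : R).
Proof.
move=> i; rewrite mul1n; have [-> | W_gt0] := posnP #|W i|; first by rewrite invr0 mulr0.
by rewrite ler_pdivrMr ?ltr0n // mul1r ler_nat leq_imset_card.
Qed.

Lemma xor_code_rate (R : realType) : rates_locality W K (1 : R) l%:R.
Proof.
exists bool, 1%N, l, xor_encoder, xor_reads, xor_decoder; split => //.
- by rewrite card_bool.
- exact: xor_code_valid.
- exact: xor_code_locality.
- by rewrite divr1.
Qed.

End CliqueCoverCode.

Lemma clique_cover_rate (R : realType) (n N : nat) (W K : 'I_n -> {set 'I_N})
    (P : {set {set 'I_N}}) :
  (forall i i' j, j \in W i -> j \in W i' -> i = i') ->
  clique_cover (und_edge W K) P -> rates_locality W K (1 : R) #|P|%:R.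
Proof.
move=> W_disjoint /andP [/forall_inP P_clique /eqP coverP].
have cl_spec j : exists k : 'I_#|P|, j \in enum_val k.
  have /bigcupP [C PC Cj] : j \in finset.cover P by rewrite coverP finset.in_setT.
  by exists (enum_rank_in PC C); rewrite enum_rankK_in.
pose S (k : 'I_#|P|) : {set 'I_N} := enum_val k.
pose cl j := xchoose (cl_spec j).
apply: (xor_code_rate (K := K) W_disjoint (S := S) (cl := cl)) => [k | j].
- exact: P_clique _ (enum_valP k).
- exact: xchooseP (cl_spec j).
Qed.

Lemma in_setI12 (s : seq nat) (j : 'I_12) : (j \in setI12 s) = (val j \in s).
Proof. by rewrite inE. Qed.

Local Notation u1 := (@Ordinal 3 0 isT).
Local Notation u2 := (@Ordinal 3 1 isT).
Local Notation u3 := (@Ordinal 3 2 isT).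

Lemma exists_ord3 (P : pred 'I_3) : [exists i, P i] = [|| P u1, P u2 | P u3].
Proof.
apply/existsP/or3P => [[[[|[|[|//]]] lt_i3] Pi] | [] Pi]; try by eexists; exact: Pi.
all: rewrite (bool_irrelevance lt_i3 isT) in Pi.
all: by [constructor 1 | constructor 2 | constructor 3].
Qed.

Definition star_edge (p q : nat) : bool :=
  let K22 s t := (p \in s) && (q \in t) || (p \in t) && (q \in s) in
  [|| K22 [:: 0; 1] [:: 4; 5], K22 [:: 0; 2] [:: 8; 9] | K22 [:: 4; 6] [:: 8; 10]]%N.

Lemma Gstar_uE (a b : 'I_12) : Gstar_u a b = star_edge (val a) (val b).
Proof.
rewrite /Gstar_u /und_edge /side_info_edge !exists_ord3 /= !in_setI12.
case: a b => [p _] [q _] /=.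
by do 12?case: p => [|p]; do 12?case: q => [|q].
Qed.

Lemma setI12_independent (s : seq nat) :
  all2rel (fun p q => ~~ star_edge p q) s -> independent Gstar_u (setI12 s).
Proof.
move=> /allrelP s_indep; apply/forall_inP => x sx; apply/forall_inP => y sy.
by rewrite Gstar_uE s_indep ?implybT // -in_setI12.
Qed.

Lemma setI12_clique (s : seq nat) :
  all2rel (fun p q => (p != q) ==> star_edge p q) s -> is_clique Gstar_u (setI12 s).
Proof.
move=> /allrelP s_clique; apply/forall_inP => x sx; apply/forall_inP => y sy.
by rewrite Gstar_uE -val_eqE s_clique // -in_setI12.
Qed.

Lemma card_setI12 (s : seq nat) : #|setI12 s| = count (mem s) (iota 0 12)%N.
Proof.
by rewrite cardsE cardE /enum_mem size_filter -val_enum_ord [RHS]count_map enumT.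
Qed.

Definition Istar : {set 'I_12} := setI12 [:: 0; 1; 2; 3; 6; 7; 11]%N.

Lemma Istar_independent : independent Gstar_u Istar.
Proof. by apply: setI12_independent. Qed.

Lemma card_Istar : #|Istar| = 7%N.
Proof. by rewrite card_setI12. Qed.

Lemma Wstar_div4 (i : 'I_3) (j : 'I_12) : j \in Wstar i -> val i = (val j %/ 4)%N.
Proof.
case: i => [[|[|[|//]]] lt_i]; rewrite /Wstar in_setI12 /=.
all: by rewrite !inE => /or4P [] /eqP ->.
Qed.

Lemma Wstar_disjoint (i i' : 'I_3) (j : 'I_12) :
  j \in Wstar i -> j \in Wstar i' -> i = i'.
Proof. by move=> /Wstar_div4 ij /Wstar_div4 i'j; apply: val_inj; rewrite /= ij i'j. Qed.

Lemma Istar_complement_decodes : complement_decodes Wstar Kstar Istar.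
Proof.
move=> D outD D_closed.
have W1 : Wstar u1 \subset D.
  apply/D_closed/(fintype.subset_trans _ outD)/fintype.subsetP => -[p lt_p].
  by rewrite /Kstar /Istar !inE /= => /or4P [] /eqP ->.
have W2 : Wstar u2 \subset D.
  apply/D_closed/(@fintype.subset_trans _ _ (Wstar u1 :|: ~: Istar));
    last by rewrite finset.subUset W1 outD.
  apply/fintype.subsetP => -[p lt_p].
  by rewrite /Kstar /Wstar /Istar !inE /= => /or4P [] /eqP ->.
have W3 : Wstar u3 \subset D.
  apply/D_closed/(@fintype.subset_trans _ _ (Wstar u1 :|: Wstar u2));
    last by rewrite finset.subUset W1 W2.
  apply/fintype.subsetP => -[p lt_p].
  by rewrite /Kstar /Wstar !inE /= => /or4P [] /eqP ->.
have W_D : Wstar u1 :|: Wstar u2 :|: Wstar u3 \subset D.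
  by rewrite !finset.subUset W1 W2 W3.
apply/setP => j; rewrite finset.in_setT; apply: (fintype.subsetP W_D).
case: j => p lt_p; rewrite /Wstar !inE /=.
by do 12?case: p lt_p => [|p] lt_p.
Qed.

Definition star_cliques : seq (seq nat) :=
  [:: [:: 0; 4; 8]; [:: 1; 5]; [:: 2; 9]; [:: 6; 10]; [:: 3]; [:: 7]; [:: 11]]%N.

Definition Pstar : {set {set 'I_12}} := [set:: map setI12 star_cliques].

Lemma Pstar_cover : clique_cover Gstar_u Pstar.
Proof.
apply/andP; split.
  apply/forall_inP => C; rewrite inE => /mapP [s s_clique ->].
  by apply: setI12_clique; move: s s_clique; apply/allP.
apply/eqP/setP => j; rewrite finset.in_setT; apply/bigcupP.
have /hasP [s s_clique js] : has (fun s => val j \in s) star_cliques.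
  by case: j => p lt_p /=; do 12?case: p lt_p => [|p] lt_p.
by exists (setI12 s); rewrite ?in_setI12 // inE map_f.
Qed.

Lemma card_Pstar_le : (#|Pstar| <= 7)%N.
Proof. by rewrite cardsE (leq_trans (card_size _)) // size_map. Qed.

Theorem theorem5 (R : realType) :
  beta_star Wstar Kstar (1 : R) = frac_clique_cover_number Gstar_u R /\
  frac_clique_cover_number Gstar_u R = (clique_cover_number Gstar_u)%:R /\
  clique_cover_number Gstar_u = 7%N.
Proof.
have Pstar_ge := independent_le_clique_cover Istar_independent Pstar_cover.
have ccn_ge := clique_cover_number_ge Istar_independent.
rewrite card_Istar in Pstar_ge ccn_ge.
have card_Pstar : #|Pstar| = 7%N by apply/anti_leq; rewrite card_Pstar_le Pstar_ge.
have ccn7 : clique_cover_number Gstar_u = 7%N.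
  apply/anti_leq; rewrite ccn_ge andbT.
  exact: leq_trans (clique_cover_number_le Pstar_cover) card_Pstar_le.
have frac7 : frac_clique_cover_number Gstar_u R = 7.
  apply: inf_eq_min; first by have := clique_cover_frac R Pstar_cover; rewrite card_Pstar.
  by move=> s /(frac_clique_covers_ge Istar_independent); rewrite card_Istar.
have beta7 : beta_star Wstar Kstar (1 : R) = 7.
  apply: inf_eq_min.
    by have := clique_cover_rate R Wstar_disjoint Pstar_cover; rewrite card_Pstar.
  by move=> b /(rates_locality_ge Istar_complement_decodes); rewrite card_Istar.
by rewrite beta7 frac7 ccn7.
Qed.
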